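(* For $\sigma>0$ let $k_\sigma(x,y) = \exp(-\|x-y\|^2/(2\sigma^2))$ be the Gaussian kernel on $\mathbb R^d$, and let $\langle\cdot,\cdot\rangle_{\sigma'}$ denote the inner product of the RKHS $\mathcal H_{\sigma'}$ of $k_{\sigma'}$. Then for all $x,y,a,b\in\mathbb R^d$, $$\langle k_\sigma(x,\cdot)k_\sigma(y,\cdot),\ k_\sigma(a,\cdot)k_\sigma(b,\cdot)\rangle_{\sigma/\sqrt2} = k_{\sigma\sqrt2}(x,a)\,k_{\sigma\sqrt2}(x,b)\,k_{\sigma\sqrt2}(y,a)\,k_{\sigma\sqrt2}(y,b).$$ *)

From HB Require Import structures.
From mathcomp Require Import all_boot all_order all_algebra.
From mathcomp Require Import reals.
From mathcomp Require Import sequences exp.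
From Stdlib Require Import ClassicalEpsilon.
Set Implicit Arguments. Unset Strict Implicit. Unset Printing Implicit Defensive.
Import Order.TTheory GRing.Theory Num.Theory.
Local Open Scope ring_scope.

Definition sqnorm (R : realType) (d : nat) (x : 'rV[R]_d) : R :=
  \sum_(i < d) (x ord0 i) ^+ 2.

Definition gauss (R : realType) (d : nat) (s : R) (x y : 'rV[R]_d) : R :=
  expR (- sqnorm (x - y) / (2 * s ^+ 2)).

Definition span_fun (R : realType) (d : nat) (s : R)
    (l : seq (R * 'rV[R]_d)) : 'rV[R]_d -> R :=
  fun u => \sum_(p <- l) p.1 * gauss s p.2 u.

(* a representation of f as an element of span{k_s(z,.)} (chosen by
   classical choice; arbitrary if f is not in the span) *)
Definition span_rep (R : realType) (d : nat) (s : R) (f : 'rV[R]_d -> R)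
    : seq (R * 'rV[R]_d) :=
  epsilon (inhabits [::]) (fun l => f = span_fun s l).

(* RKHS inner product of H_s on the dense subspace span{k_s(z,.)}:
   < sum a_i k(x_i,.), sum b_j k(y_j,.) > = sum_ij a_i b_j k(x_i,y_j) *)
Definition rkhs_inner (R : realType) (d : nat) (s : R)
    (f g : 'rV[R]_d -> R) : R :=
  \sum_(p <- span_rep s f) \sum_(q <- span_rep s g) p.1 * q.1 * gauss s p.2 q.2.

(** Completing the square shows that the product [k_s(x,.) k_s(y,.)] is the single kernel
    [k_(s/sqrt 2)((x+y)/2, .)] scaled by [k_(s sqrt 2)(x,y)].  Both arguments of the inner
    product thus lie in the span of [k_(s/sqrt 2)], and the reproducing property evaluates it
    as [k_(s sqrt 2)(x,y) k_(s sqrt 2)(a,b) k_(s/sqrt 2)((x+y)/2, (a+b)/2)]; the four-point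
    identity [|x-y|^2 + |a-b|^2 + |x+y-a-b|^2 = |x-a|^2 + |x-b|^2 + |y-a|^2 + |y-b|^2]
    turns this into the product of the four kernels. *)
From HB Require Import structures.
From mathcomp Require Import all_boot all_order all_algebra.
From mathcomp Require Import reals.
From mathcomp Require Import sequences exp.
From mathcomp Require Import ring.
From Stdlib Require Import ClassicalEpsilon FunctionalExtensionality.
Set Implicit Arguments.
Unset Strict Implicit.
Import Order.TTheory GRing.Theory Num.Theory.
Local Open Scope ring_scope.

Section Gaussian.
Variables (R : realType) (d : nat).
Implicit Types (s c : R) (x y z a b u : 'rV[R]_d) (f g : 'rV[R]_d -> R).

Definition midpoint x y : 'rV[R]_d := 2^-1 *: (x + y).

Lemma sqnormBC x y : sqnorm (x - y) = sqnorm (y - x).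
Proof. by apply: eq_bigr => i _; rewrite !mxE -sqrrN opprB. Qed.

Lemma sqnorm_midpoint x y u :
  sqnorm (x - u) + sqnorm (y - u)
  = sqnorm (x - y) / 2 + 2 * sqnorm (midpoint x y - u).
Proof.
rewrite /sqnorm -big_split mulr_suml mulr_sumr -big_split.
by apply: eq_bigr => i _; rewrite !mxE /=; field.
Qed.

Lemma sqnorm_midpoints x y a b :
  sqnorm (x - y) + sqnorm (a - b) + 4 * sqnorm (midpoint x y - midpoint a b)
  = sqnorm (x - a) + sqnorm (x - b) + sqnorm (y - a) + sqnorm (y - b).
Proof.
rewrite /sqnorm mulr_sumr -!big_split.
by apply: eq_bigr => i _; rewrite !mxE /=; field.
Qed.

Lemma gaussC s x y : gauss s x y = gauss s y x.
Proof. by rewrite /gauss sqnormBC. Qed.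

Lemma sqr_mul_sqrt2 s : (s * Num.sqrt 2) ^+ 2 = 2 * s ^+ 2.
Proof. by rewrite exprMn sqr_sqrtr ?ler0n // mulrC. Qed.

Lemma sqr_div_sqrt2 s : (s / Num.sqrt 2) ^+ 2 = s ^+ 2 / 2.
Proof. by rewrite expr_div_n sqr_sqrtr ?ler0n. Qed.

Lemma gauss_mul s x y u : s != 0 ->
  gauss s x u * gauss s y u
  = gauss (s * Num.sqrt 2) x y * gauss (s / Num.sqrt 2) (midpoint x y) u.
Proof.
move=> s0; rewrite /gauss -!expRD sqr_mul_sqrt2 sqr_div_sqrt2; congr expR.
have -> : sqnorm (x - u)
        = sqnorm (x - y) / 2 + 2 * sqnorm (midpoint x y - u) - sqnorm (y - u).
  by rewrite -sqnorm_midpoint addrK.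
by field; rewrite s0.
Qed.

Lemma gauss_midpoints s x y a b : s != 0 ->
  gauss (s * Num.sqrt 2) x y * gauss (s * Num.sqrt 2) a b
    * gauss (s / Num.sqrt 2) (midpoint x y) (midpoint a b)
  = gauss (s * Num.sqrt 2) x a * gauss (s * Num.sqrt 2) x b
    * gauss (s * Num.sqrt 2) y a * gauss (s * Num.sqrt 2) y b.
Proof.
move=> s0; rewrite /gauss -!expRD sqr_mul_sqrt2 sqr_div_sqrt2; congr expR.
have -> : sqnorm (x - a)
    = sqnorm (x - y) + sqnorm (a - b) + 4 * sqnorm (midpoint x y - midpoint a b)
      - sqnorm (x - b) - sqnorm (y - a) - sqnorm (y - b).
  by rewrite sqnorm_midpoints; ring.
by field; rewrite s0.
Qed.

Lemma span_repP s f l : f = span_fun s l -> f = span_fun s (span_rep s f).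
Proof.
move=> fl.
exact: (epsilon_spec (inhabits [::]) (fun l => f = span_fun s l) (ex_intro _ l fl)).
Qed.

Lemma rkhs_innerE s f g l : g = span_fun s l ->
  rkhs_inner s f g = \sum_(p <- span_rep s f) p.1 * g p.2.
Proof.
move=> /span_repP gE; apply: eq_bigr => p _.
rewrite [in RHS]gE /span_fun /= big_distrr; apply: eq_bigr => q _.
by rewrite gaussC /= mulrA.
Qed.

Lemma rkhs_inner_kernel s f l c z : f = span_fun s l ->
  rkhs_inner s f (span_fun s [:: (c, z)]) = c * f z.
Proof.
move=> /span_repP fE; rewrite (rkhs_innerE _ (erefl _)).
rewrite [in RHS]fE /span_fun /= big_distrr; apply: eq_bigr => p _.
by rewrite big_seq1 gaussC /= mulrCA.
Qed.

End Gaussian.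

Theorem lemma5 (R : realType) (d : nat) (sigma : R) (hsigma : 0 < sigma)
    (x y a b : 'rV[R]_d) :
  rkhs_inner (sigma / Num.sqrt 2)
    (fun u => gauss sigma x u * gauss sigma y u)
    (fun u => gauss sigma a u * gauss sigma b u)
  = gauss (sigma * Num.sqrt 2) x a * gauss (sigma * Num.sqrt 2) x b
    * gauss (sigma * Num.sqrt 2) y a * gauss (sigma * Num.sqrt 2) y b.
Proof.
have s0 : sigma != 0 by rewrite gt_eqF.
have gauss_mulE (z w : 'rV[R]_d) : (fun u => gauss sigma z u * gauss sigma w u)
    = span_fun (sigma / Num.sqrt 2) [:: (gauss (sigma * Num.sqrt 2) z w, midpoint z w)].
  by apply: functional_extensionality => u; rewrite /span_fun big_seq1 gauss_mul.
rewrite [X in rkhs_inner _ _ X]gauss_mulE (rkhs_inner_kernel _ _ (gauss_mulE x y)).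
by rewrite gauss_mul // mulrA [_ * gauss _ x y]mulrC (gauss_midpoints _ _ _ _ s0).
Qed.
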